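(* Let $a_c\in(\pi,\frac32\pi)$ be the smallest strictly positive solution of $\tan(x)=\tanh(x)$. For $a>0$ the inequality $$\cosh(a)\sin(a)\sinh(x)\cos(x)-\sinh(a)\cos(a)\cosh(x)\sin(x)>0$$ holds for all $x\in(0,a)$ if and only if $a\in(0,a_c]$. *)

From Stdlib Require Import Reals.
Open Scope R_scope.

Definition tanhR (x : R) : R := sinh x / cosh x.

Definition is_smallest_pos_sol_tan_tanh (ac : R) : Prop :=
  0 < ac /\ tan ac = tanhR ac /\
  (forall x, 0 < x -> tan x = tanhR x -> ac <= x).

Definition ineqC6 (a x : R) : R :=
  cosh a * sin a * sinh x * cos x - sinh a * cos a * cosh x * sin x.

From Stdlib Require Import Reals Lra.
Open Scope R_scope.

(* Write psi x = sinh x cos x, chi x = cosh x sin x and delta = chi - psi.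
   For y > 0, tan y = tanh y exactly when delta y = 0, and delta > 0 on (0, PI]
   while delta (3 PI / 2) < 0; this locates a_c and gives delta > 0 on (0, a_c).
   The expression of the theorem is g_a = delta a * psi - psi a * delta.
   On (0, a_c) the quotient psi / delta strictly decreases, its derivative being
   -(sinh x cosh x - sin x cos x) / delta x ^ 2, so for a < a_c
   g_a x = delta a * delta x * (psi x / delta x - psi a / delta a) > 0, and for
   a = a_c, g_a = - psi a_c * delta with psi a_c < 0.  Conversely, for a > a_c
   positivity of g_a a_c = delta a * psi a_c forces delta a < 0, but delta a is
   the slope of g_a at its root 0, so g_a < 0 just to the right of 0. *)

Lemma deriv_pos_increasing (f f' : R -> R) (a b : R) :
  a < b ->
  (forall t, a <= t <= b -> derivable_pt_lim f t (f' t)) ->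
  (forall t, a < t < b -> 0 < f' t) ->
  f a < f b.
Proof.
  intros Hab Hf Hpos.
  destruct (MVT_cor2 f f' a b Hab Hf) as [c [Hc Hcab]].
  pose proof (Hpos c Hcab). nra.
Qed.

Lemma deriv_neg_decreasing (f f' : R -> R) (a b : R) :
  a < b ->
  (forall t, a <= t <= b -> derivable_pt_lim f t (f' t)) ->
  (forall t, a < t < b -> f' t < 0) ->
  f b < f a.
Proof.
  intros Hab Hf Hneg.
  enough (- f a < - f b) by lra.
  apply (deriv_pos_increasing (fun t => - f t) (fun t => - f' t) a b Hab).
  - intros t Ht. exact (derivable_pt_lim_opp f t (f' t) (Hf t Ht)).
  - intros t Ht. pose proof (Hneg t Ht). lra.
Qed.

Lemma deriv_neg_root_right (f : R -> R) (x0 b l : R) :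
  x0 < b -> f x0 = 0 -> derivable_pt_lim f x0 l -> l < 0 ->
  exists x, x0 < x < b /\ f x < 0.
Proof.
  intros Hb Hf0 Hd Hl.
  destruct (Hd (- l / 2) ltac:(lra)) as [del Hdel].
  pose proof (cond_pos del) as Hdel0.
  set (h := Rmin (del / 2) ((b - x0) / 2)).
  assert (Hh : 0 < h) by (apply Rmin_glb_lt; lra).
  assert (h <= del / 2) by apply Rmin_l.
  assert (h <= (b - x0) / 2) by apply Rmin_r.
  exists (x0 + h). split; [lra |].
  specialize (Hdel h ltac:(lra)).
  rewrite Rabs_right in Hdel by lra.
  specialize (Hdel ltac:(lra)).
  rewrite Hf0, Rminus_0_r in Hdel.
  apply Rabs_def2 in Hdel.
  assert (Hq : f (x0 + h) / h < 0) by lra.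
  replace (f (x0 + h)) with (f (x0 + h) / h * h) by (field; lra).
  nra.
Qed.

Lemma cosh_pos (x : R) : 0 < cosh x.
Proof. unfold cosh. pose proof (exp_pos x). pose proof (exp_pos (- x)). lra. Qed.

Lemma sinh_pos (x : R) : 0 < x -> 0 < sinh x.
Proof. intro Hx. rewrite <- sinh_0. apply sinh_lt. exact Hx. Qed.

Lemma cosh2_sinh2 (x : R) : cosh x ^ 2 - sinh x ^ 2 = 1.
Proof.
  unfold cosh, sinh.
  replace (((exp x + exp (- x)) / 2) ^ 2 - ((exp x - exp (- x)) / 2) ^ 2)
    with (exp x * exp (- x)) by field.
  rewrite <- exp_plus, Rplus_opp_r. exact exp_0.
Qed.

Lemma sin2_cos2_pow (x : R) : sin x ^ 2 + cos x ^ 2 = 1.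
Proof. rewrite <- (sin2_cos2 x). unfold Rsqr. ring. Qed.

Lemma sin_cos_lt_sinh_cosh (x : R) : 0 < x -> sin x * cos x < sinh x * cosh x.
Proof.
  intro Hx.
  enough (Hlt : sinh 0 * cosh 0 - sin 0 * cos 0 < sinh x * cosh x - sin x * cos x).
  { rewrite sinh_0, sin_0 in Hlt. lra. }
  apply (deriv_pos_increasing (fun t => sinh t * cosh t - sin t * cos t)
           (fun t => (cosh t * cosh t + sinh t * sinh t)
                     - (cos t * cos t + sin t * (- sin t))) 0 x Hx).
  - intros t _.
    apply (derivable_pt_lim_minus (sinh * cosh)%F (sin * cos)%F);
      apply derivable_pt_lim_mult;
      auto using derivable_pt_lim_sinh, derivable_pt_lim_cosh,
                 derivable_pt_lim_sin, derivable_pt_lim_cos.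
  - intros t [Ht _].
    pose proof (sinh_pos t Ht). pose proof (cosh2_sinh2 t). pose proof (sin2_cos2_pow t).
    nra.
Qed.

Definition psi (x : R) : R := sinh x * cos x.
Definition chi (x : R) : R := cosh x * sin x.
Definition delta (x : R) : R := chi x - psi x.

Lemma derivable_pt_lim_psi (x : R) :
  derivable_pt_lim psi x (cosh x * cos x - sinh x * sin x).
Proof.
  replace (cosh x * cos x - sinh x * sin x)
    with (cosh x * cos x + sinh x * - sin x) by ring.
  apply (derivable_pt_lim_mult sinh cos);
    auto using derivable_pt_lim_sinh, derivable_pt_lim_cos.
Qed.

Lemma derivable_pt_lim_chi (x : R) :
  derivable_pt_lim chi x (sinh x * sin x + cosh x * cos x).
Proof.
  apply (derivable_pt_lim_mult cosh sin);
    auto using derivable_pt_lim_cosh, derivable_pt_lim_sin.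
Qed.

Lemma derivable_pt_lim_delta (x : R) : derivable_pt_lim delta x (2 * (sinh x * sin x)).
Proof.
  replace (2 * (sinh x * sin x)) with
    ((sinh x * sin x + cosh x * cos x) - (cosh x * cos x - sinh x * sin x)) by ring.
  apply (derivable_pt_lim_minus chi psi);
    auto using derivable_pt_lim_chi, derivable_pt_lim_psi.
Qed.

Lemma continuity_delta : continuity delta.
Proof.
  intro x. apply derivable_continuous_pt.
  exists (2 * (sinh x * sin x)). apply derivable_pt_lim_delta.
Qed.

(* If cos y = 0 then tan y = sin y / 0 = 0 < tanhR y, so such y are not
   solutions; delta y = cosh y * sin y does not vanish there either. *)
Lemma tan_eq_tanhR_iff (y : R) : 0 < y -> tan y = tanhR y <-> delta y = 0.
Proof.
  intro Hy. pose proof (cosh_pos y). pose proof (sinh_pos y Hy).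
  unfold tan, tanhR, delta, chi, psi.
  destruct (Req_dec (cos y) 0) as [Hc | Hc].
  - pose proof (sin2_cos2_pow y). rewrite Hc in *.
    unfold Rdiv at 1. rewrite Rinv_0, Rmult_0_r.
    assert (0 < sinh y / cosh y) by (apply Rdiv_lt_0_compat; lra).
    split; intro H'; [lra | nra].
  - split; intro H'.
    + replace (cosh y * sin y - sinh y * cos y)
        with (cosh y * cos y * (sin y / cos y - sinh y / cosh y)) by (field; lra).
      rewrite H'. ring.
    + enough (sin y / cos y - sinh y / cosh y = 0) by lra.
      replace (sin y / cos y - sinh y / cosh y)
        with ((cosh y * sin y - sinh y * cos y) / (cosh y * cos y)) by (field; lra).
      rewrite H'. unfold Rdiv. ring.
Qed.

Lemma delta_pos_le_PI (x : R) : 0 < x <= PI -> 0 < delta x.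
Proof.
  intros [Hx HxPI].
  enough (delta 0 < delta x) by (unfold delta, chi, psi in *; rewrite sinh_0, sin_0 in *; lra).
  apply (deriv_pos_increasing delta (fun t => 2 * (sinh t * sin t)) 0 x Hx).
  - intros t _. apply derivable_pt_lim_delta.
  - intros t [Ht Htx].
    pose proof (sinh_pos t Ht). assert (0 < sin t) by (apply sin_gt_0; lra).
    nra.
Qed.

Lemma delta_3PI2_neg : delta (3 * (PI / 2)) < 0.
Proof.
  unfold delta, chi, psi. rewrite sin_3PI2, cos_3PI2.
  pose proof (cosh_pos (3 * (PI / 2))). lra.
Qed.

Lemma psi_div_delta_decreasing (x y : R) :
  0 < x < y -> (forall t, x <= t <= y -> delta t <> 0) ->
  psi y / delta y < psi x / delta x.
Proof.
  intros Hxy Hdelta.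
  apply (deriv_neg_decreasing (psi / delta)%F
           (fun t => ((cosh t * cos t - sinh t * sin t) * delta t
                      - 2 * (sinh t * sin t) * psi t) / (delta t)²) x y ltac:(lra)).
  - intros t Ht. apply derivable_pt_lim_div;
      auto using derivable_pt_lim_psi, derivable_pt_lim_delta.
  - intros t Ht.
    replace ((cosh t * cos t - sinh t * sin t) * delta t - 2 * (sinh t * sin t) * psi t)
      with (sin t * cos t * (cosh t ^ 2 - sinh t ^ 2)
            - sinh t * cosh t * (sin t ^ 2 + cos t ^ 2))
      by (unfold delta, chi, psi; ring).
    rewrite cosh2_sinh2, sin2_cos2_pow.
    apply Rdiv_neg_pos.
    + pose proof (sin_cos_lt_sinh_cosh t ltac:(lra)). lra.
    + apply Rsqr_pos_lt, Hdelta. lra.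
Qed.

Lemma ineqC6_eq (a x : R) : ineqC6 a x = delta a * psi x - psi a * delta x.
Proof. unfold ineqC6, delta, chi, psi. ring. Qed.

Section SmallestSolution.

Variable ac : R.
Hypothesis Hac : is_smallest_pos_sol_tan_tanh ac.

Lemma delta_ac : delta ac = 0.
Proof. destruct Hac as [H0 [Hsol _]]. exact (proj1 (tan_eq_tanhR_iff ac H0) Hsol). Qed.

Lemma delta_pos_lt_ac (x : R) : 0 < x < ac -> 0 < delta x.
Proof.
  intros Hx. destruct Hac as [_ [_ Hmin]].
  destruct (Rle_lt_dec x PI) as [HxPI | HPIx]; [apply delta_pos_le_PI; lra |].
  destruct (Rlt_le_dec 0 (delta x)) as [Hpos | Hnpos]; [exact Hpos | exfalso].
  pose proof (delta_pos_le_PI PI (conj PI_RGT_0 (Rle_refl PI))) as HdPI.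
  destruct (IVT_cor delta PI x continuity_delta ltac:(lra) ltac:(nra)) as [z [Hz Hdz]].
  pose proof PI_RGT_0.
  pose proof (Hmin z ltac:(lra) (proj2 (tan_eq_tanhR_iff z ltac:(lra)) Hdz)).
  lra.
Qed.

Lemma ac_bounds : PI < ac < 3 / 2 * PI.
Proof.
  destruct Hac as [H0 _]. pose proof delta_ac as Hdac.
  split.
  - destruct (Rlt_le_dec PI ac) as [H | H]; [exact H |].
    pose proof (delta_pos_le_PI ac (conj H0 H)). lra.
  - replace (3 / 2 * PI) with (3 * (PI / 2)) by field.
    pose proof delta_3PI2_neg as H3PI2.
    destruct (Rtotal_order ac (3 * (PI / 2))) as [H | [H | H]].
    + exact H.
    + rewrite <- H in *. lra.
    + pose proof PI_RGT_0. pose proof (delta_pos_lt_ac (3 * (PI / 2)) ltac:(lra)). lra.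
Qed.

Lemma psi_ac_neg : psi ac < 0.
Proof.
  pose proof ac_bounds. pose proof PI_RGT_0.
  pose proof (sinh_pos ac ltac:(lra)).
  assert (cos ac < 0) by (apply cos_lt_0; lra).
  unfold psi. nra.
Qed.

Lemma ineqC6_pos_of_le_ac (a x : R) : 0 < x < a -> a <= ac -> 0 < ineqC6 a x.
Proof.
  intros Hx Ha. rewrite ineqC6_eq.
  pose proof (delta_pos_lt_ac x ltac:(lra)) as Hdx. pose proof psi_ac_neg.
  destruct (Req_dec a ac) as [-> | Hne].
  - rewrite delta_ac. nra.
  - pose proof (delta_pos_lt_ac a ltac:(lra)) as Hda.
    assert (Hq : psi a / delta a < psi x / delta x).
    { apply psi_div_delta_decreasing; [lra |].
      intros t Ht. pose proof (delta_pos_lt_ac t ltac:(lra)). lra. }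
    replace (delta a * psi x - psi a * delta x)
      with (delta a * delta x * (psi x / delta x - psi a / delta a)) by (field; lra).
    apply Rmult_lt_0_compat; [nra | lra].
Qed.

Lemma le_ac_of_ineqC6_pos (a : R) :
  0 < a -> (forall x, 0 < x < a -> ineqC6 a x > 0) -> a <= ac.
Proof.
  intros Ha Hpos.
  destruct (Rle_lt_dec a ac) as [H | Hlt]; [exact H | exfalso].
  pose proof ac_bounds. pose proof PI_RGT_0.
  assert (Hda : delta a < 0).
  { pose proof (Hpos ac ltac:(lra)) as Hg. pose proof psi_ac_neg.
    rewrite ineqC6_eq, delta_ac in Hg. nra. }
  set (g := (mult_real_fct (delta a) psi - mult_real_fct (psi a) delta)%F).
  assert (Hg0 : g 0 = 0).
  { unfold g, minus_fct, mult_real_fct, delta, chi, psi. rewrite sinh_0, sin_0. ring. }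
  assert (Hgd : derivable_pt_lim g 0 (delta a)).
  { pose proof (derivable_pt_lim_minus _ _ 0 _ _
      (derivable_pt_lim_scal psi (delta a) 0 _ (derivable_pt_lim_psi 0))
      (derivable_pt_lim_scal delta (psi a) 0 _ (derivable_pt_lim_delta 0))) as Hd.
    rewrite cosh_0, cos_0, sinh_0, sin_0 in Hd.
    replace (delta a) with (delta a * (1 * 1 - 0 * 0) - psi a * (2 * (0 * 0))) by ring.
    exact Hd. }
  destruct (deriv_neg_root_right g 0 a (delta a) Ha Hg0 Hgd Hda) as [x [Hx Hgx]].
  unfold g, minus_fct, mult_real_fct in Hgx.
  pose proof (Hpos x Hx). rewrite ineqC6_eq in *. lra.
Qed.

End SmallestSolution.

Theorem lemmaC6 (ac : R) (Hac : is_smallest_pos_sol_tan_tanh ac) :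
  (PI < ac < 3 / 2 * PI) /\
  (forall a : R, 0 < a ->
     ((forall x : R, 0 < x < a -> ineqC6 a x > 0) <-> (0 < a <= ac))).
Proof.
  split; [exact (ac_bounds ac Hac) |].
  intros a Ha. split.
  - intro Hpos. split; [exact Ha | exact (le_ac_of_ineqC6_pos ac Hac a Ha Hpos)].
  - intros [_ Hle] x Hx. exact (ineqC6_pos_of_le_ac ac Hac a x Hx Hle).
Qed.
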